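(* Let $\mathbb{X},\mathbb{Y}$ be finite-dimensional real Hilbert spaces, $f:\mathbb{X}\to(-\infty,\infty]$ and $g:\mathbb{Y}\to(-\infty,\infty]$ proper, convex and lower semicontinuous, $K:\mathbb{X}\to\mathbb{Y}$ linear, and $h:\mathbb{X}\to\mathbb{R}$ convex and differentiable with $\bar L$-Lipschitz gradient. Assume (A1) below holds and that $g^*$ is strongly convex with modulus $\gamma_{g^*}>0$ and $h$ is strongly convex with modulus $\gamma_h>0$. Let $\{(z_n,x_n,w_n,y_n,\tau_n)\}$ be generated by the P-GRPDA algorithm described in the context, and suppose $\{(x_n,y_n)\}$ converges to the unique primal-dual solution $(\bar x,\bar y)$. Then there exist constants $V_1,V_2,Z>0$, a scalar $\zeta\in(0,1)$ and a natural number $n_4$ such that for all $n\ge n_4$, $$\|\bar x-z_{n+2}\|^2\le Z\zeta^n,\qquad\|\bar y-y_n\|^2\le V_1\zeta^n,\qquad\|x_n-x_{n+1}\|^2\le V_2\zeta^n,$$ and thus $\{(x_n,y_n)\}$ converges R-linearly to $(\bar x,\bar y)$.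
   Context: $\phi=\frac{1+\sqrt5}{2}$; $K^*$ adjoint of $K$; $g^*$ Fenchel conjugate of $g$; $\operatorname{prox}_{\lambda f}(x)=\arg\min_{u}\{f(u)+\frac{1}{2\lambda}\|u-x\|^2\}$. (A1): the saddle point problem $\min_{x}\max_{y}\mathbb{L}(x,y):=f(x)+h(x)+\langle Kx,y\rangle-g^*(y)$ has a nonempty solution set, and $0\in\operatorname{ri}(K(\operatorname{dom}f)-\operatorname{dom}g)$ (ri = relative interior). (The paper also assumes the proximal maps of $f,g$ are efficiently computable.) A primal-dual solution is a saddle point $(\bar x,\bar y)$ of $\mathbb{L}$. Strong convexity: $h(y)-h(z)\ge\langle\nabla h(z),y-z\rangle+\frac{\gamma_h}{2}\|y-z\|^2$ for all $y,z$; $g^*(y)-g^*(z)\ge\langle u,y-z\rangle+\frac{\gamma_{g^*}}{2}\|y-z\|^2$ for all $y,z$ and all $u\in\partial g^*(z)$. A sequence $v_n$ converges R-linearly to $v$ if $\|v_n-v\|\le M\epsilon_n$ for all large $n$ with some $M>0$ and some sequence $\epsilon_n$ converging Q-linearly to $0$ (i.e. $|\epsilon_{n+1}|\le q|\epsilon_n|$ for large $n$, some $q\in(0,1)$). P-GRPDA: choose $x_0\in\mathbb{X}$, $y_0\in\mathbb{Y}$, set $z_0=x_0$, choose $\beta>0$, $\psi\in(1,\phi]$, $0<2\mu'<\mu<\psi/2$, $\tau_0>0$. For $n=1,2,\dots$: $z_n=\frac{\psi-1}{\psi}x_{n-1}+\frac1\psi z_{n-1}$; $x_n=\operatorname{prox}_{\tau_{n-1}f}\big(z_n-\tau_{n-1}K^*y_{n-1}-\tau_{n-1}\nabla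 h(x_{n-1})\big)$; $\tau_n=\min\left\{\tau_{n-1},\ \frac{\mu\|x_n-x_{n-1}\|}{\sqrt\beta\|Kx_n-Kx_{n-1}\|},\ \frac{\mu'\|x_n-x_{n-1}\|}{\|\nabla h(x_n)-\nabla h(x_{n-1})\|}\right\}$, $\sigma_n=\beta\tau_n$; $w_n=\operatorname{prox}_{\frac{1}{\sigma_n}g}\big(\frac{y_{n-1}}{\sigma_n}+Kx_n\big)$; $y_n=y_{n-1}+\sigma_n(Kx_n-w_n)$. Conventions in the $\tau_n$ update: $1/0=\infty$ (a term with zero denominator and nonzero numerator is ignored) and $0/0=\infty$ (so $\tau_n=\tau_{n-1}$ if $x_n=x_{n-1}$). *)

(* R : realType, finite-dimensional real Hilbert spaces are
   modelled as row vectors 'rV[R]_n with the standard (Euclidean) inner product. *)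
From HB Require Import structures.
From mathcomp Require Import all_boot all_order all_algebra.
From mathcomp Require Import boolp classical_sets reals constructive_ereal ereal.
Set Implicit Arguments. Unset Strict Implicit. Unset Printing Implicit Defensive.
Import Order.TTheory GRing.Theory Num.Theory.
Local Open Scope ring_scope.
Local Open Scope classical_set_scope.

Section Defs.
Variable R : realType.

Definition dotv {n : nat} (u v : 'rV[R]_n) : R := \sum_(i < n) u ord0 i * v ord0 i.
Definition enorm {n : nat} (u : 'rV[R]_n) : R := Num.sqrt (dotv u u).

Definition proper_fun {n : nat} (f : 'rV[R]_n -> \bar R) : Prop :=
  (forall x, -oo < f x)%E /\ exists x, (f x < +oo)%E.

Definition convex_efun {n : nat} (f : 'rV[R]_n -> \bar R) : Prop :=
  forall (x y : 'rV[R]_n) (t : R), 0 < t < 1 ->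
    (f (t *: x + (1 - t) *: y)%R <= t%:E * f x + (1 - t)%R%:E * f y)%E.

Definition convex_rfun {n : nat} (h : 'rV[R]_n -> R) : Prop :=
  forall (x y : 'rV[R]_n) (t : R), 0 <= t <= 1 ->
    h (t *: x + (1 - t) *: y) <= t * h x + (1 - t) * h y.

Definition lsc_efun {n : nat} (f : 'rV[R]_n -> \bar R) : Prop :=
  forall (x : 'rV[R]_n) (a : R), (a%:E < f x)%E ->
    exists2 d : R, 0 < d & forall u, enorm (u - x) < d -> (a%:E < f u)%E.

Definition is_gradient {n : nat} (h : 'rV[R]_n -> R) (gh : 'rV[R]_n -> 'rV[R]_n) : Prop :=
  forall (x : 'rV[R]_n) (eps : R), 0 < eps ->
    exists2 d : R, 0 < d & forall v, enorm v < d ->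
      `| h (x + v) - h x - dotv (gh x) v | <= eps * enorm v.

Definition fconj {n : nat} (g : 'rV[R]_n -> \bar R) (y : 'rV[R]_n) : \bar R :=
  ereal_sup [set ((dotv x y)%:E - g x)%E | x in [set: 'rV[R]_n]].

(* The subdifferential at z is empty when g z is not finite. *)
Definition subdiff {n : nat} (g : 'rV[R]_n -> \bar R) (z u : 'rV[R]_n) : Prop :=
  g z \is a fin_num /\ forall y, (g z + (dotv u (y - z)%R)%:E <= g y)%E.

Definition strongly_convex_efun {n : nat} (g : 'rV[R]_n -> \bar R) (gam : R) : Prop :=
  forall y z u, subdiff g z u ->
    (g z + (dotv u (y - z) + gam / 2 * enorm (y - z) ^+ 2)%R%:E <= g y)%E.

Definition strongly_convex_rfun {n : nat} (h : 'rV[R]_n -> R)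
  (gh : 'rV[R]_n -> 'rV[R]_n) (gam : R) : Prop :=
  forall y z, h y - h z >= dotv (gh z) (y - z) + gam / 2 * enorm (y - z) ^+ 2.

Definition is_prox {n : nat} (lam : R) (phi : 'rV[R]_n -> \bar R) (v u : 'rV[R]_n) : Prop :=
  forall u', (phi u + ((2 * lam)^-1 * enorm (u - v) ^+ 2)%R%:E
              <= phi u' + ((2 * lam)^-1 * enorm (u' - v) ^+ 2)%R%:E)%E.

Definition aff_hull {m : nat} (S : set 'rV[R]_m) : set 'rV[R]_m :=
  [set z | exists (k : nat) (p : 'I_k -> 'rV[R]_m) (c : 'I_k -> R),
     [/\ (forall i, S (p i)), \sum_(i < k) c i = 1 & z = \sum_(i < k) c i *: p i]].

Definition rel_interior {m : nat} (S : set 'rV[R]_m) : set 'rV[R]_m :=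
  [set z | S z /\ exists2 e : R, 0 < e &
     forall u, aff_hull S u -> enorm (u - z) < e -> S u].

(* the Lagrangian L(x,y) = f x + h x + <Kx, y> - g^*(y), K x := x *m K *)
Definition lagr {n m : nat} (f : 'rV[R]_n -> \bar R) (h : 'rV[R]_n -> R)
  (K : 'M[R]_(n, m)) (g : 'rV[R]_m -> \bar R) (x : 'rV[R]_n) (y : 'rV[R]_m) : \bar R :=
  (f x + (h x + dotv (x *m K) y)%R%:E - fconj g y)%E.

Definition saddle_point {n m : nat} (f : 'rV[R]_n -> \bar R) (h : 'rV[R]_n -> R)
  (K : 'M[R]_(n, m)) (g : 'rV[R]_m -> \bar R) (xb : 'rV[R]_n) (yb : 'rV[R]_m) : Prop :=
  [/\ f xb \is a fin_num, fconj g yb \is a fin_num &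
      (forall x y, (lagr f h K g xb y <= lagr f h K g xb yb <= lagr f h K g x yb)%E)].

Definition A1 {n m : nat} (f : 'rV[R]_n -> \bar R) (h : 'rV[R]_n -> R)
  (K : 'M[R]_(n, m)) (g : 'rV[R]_m -> \bar R) : Prop :=
  (exists xb yb, saddle_point f h K g xb yb) /\
  rel_interior [set (x *m K) - w | x in [set x | (f x < +oo)%E] &
                                   w in [set w | (g w < +oo)%E]] 0.

Definition qratio (a b : R) : \bar R := if b == 0 then +oo%E else (a / b)%:E.

Definition golden : R := (1 + Num.sqrt 5) / 2.

(* the P-GRPDA iteration (for n = 1,2,... written with index k.+1) *)
Definition pgrpda {n m : nat} (f : 'rV[R]_n -> \bar R) (gh : 'rV[R]_n -> 'rV[R]_n)
  (K : 'M[R]_(n, m)) (g : 'rV[R]_m -> \bar R)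
  (beta psi mu mu' : R)
  (z x : nat -> 'rV[R]_n) (w y : nat -> 'rV[R]_m) (tau : nat -> R) : Prop :=
  [/\ 0 < beta, 1 < psi <= golden, (0 < 2 * mu' < mu) && (mu < psi / 2),
      (0 < tau 0) /\ (z 0 = x 0) &
      (forall k : nat,
      [/\ z k.+1 = ((psi - 1) / psi) *: x k + psi^-1 *: z k,
          is_prox (tau k) f (z k.+1 - tau k *: (y k *m K^T) - tau k *: gh (x k)) (x k.+1),
          (tau k.+1)%:E = Order.min (tau k)%:E
             (Order.min (qratio (mu * enorm (x k.+1 - x k))
                                (Num.sqrt beta * enorm (x k.+1 *m K - x k *m K)))
                        (qratio (mu' * enorm (x k.+1 - x k))
                                (enorm (gh (x k.+1) - gh (x k))))),
          is_prox (beta * tau k.+1)^-1 g ((beta * tau k.+1)^-1 *: y k + x k.+1 *m K) (w k.+1) &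
          y k.+1 = y k + (beta * tau k.+1) *: (x k.+1 *m K - w k.+1)])].

Definition Qlinear_to0 (e : nat -> R) : Prop :=
  exists2 q : R, 0 < q < 1 & exists N : nat, forall k, (N <= k)%N -> `|e k.+1| <= q * `|e k|.

Definition Rlinear_conv {n m : nat} (x : nat -> 'rV[R]_n) (y : nat -> 'rV[R]_m)
  (xb : 'rV[R]_n) (yb : 'rV[R]_m) : Prop :=
  exists2 M : R, 0 < M & exists e : nat -> R, Qlinear_to0 e /\
    exists N : nat, forall k, (N <= k)%N ->
      Num.sqrt (enorm (x k - xb) ^+ 2 + enorm (y k - yb) ^+ 2) <= M * e k.

End Defs.

(* The step sizes tau_n are nonincreasing and bounded below, since K is bounded and
   grad h is Lipschitz; hence eventually tau_n <= (1 + eps) tau_(n+1) for any eps > 0.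
   From then on the prox optimality conditions, the saddle point inequalities and the
   strong convexity of h and g^* give the descent
     E_(n+1) + c (|x_(n+2) - x_(n+1)|^2 + |z_(n+2) - x_(n+1)|^2 + |y_(n+1) - yb|^2
                  + |x_(n+1) - xb|^2) <= E_n
   for the Lyapunov function
     E_n = psi/(psi-1) |z_(n+2) - xb|^2 + 1/beta |y_n - yb|^2 + mu' |x_(n+1) - x_n|^2,
   and the extra terms dominate a fixed fraction of E_(n+1) because
   z_(n+3) - xb is a combination of x_(n+2) - x_(n+1), x_(n+1) - xb and z_(n+2) - x_(n+1).
   So E_n, and each of its terms, decays geometrically. *)

From HB Require Import structures.
From mathcomp Require Import all_boot all_order all_algebra.
From mathcomp Require Import boolp reals constructive_ereal ereal.
From mathcomp Require Import ring lra.
Set Implicit Arguments. Unset Strict Implicit. Unset Printing Implicit Defensive.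
Import Order.TTheory GRing.Theory Num.Theory.
Local Open Scope ring_scope.

Lemma ler_of_le_add_scaled (R : realFieldType) (a b c : R) : 0 <= c ->
  (forall t, 0 < t < 1 -> a <= b + t * c) -> a <= b.
Proof.
move=> c0 H; apply/ler_addgt0Pr => e e0.
have d0 : 0 < c + e + 1 by lra.
have t0 : 0 < e / (c + e + 1) by apply: divr_gt0.
have t1 : e / (c + e + 1) < 1 by rewrite ltr_pdivrMr //; lra.
have : e / (c + e + 1) * c <= e by rewrite mulrAC ler_pdivrMr //; nra.
have := H _ (andb_true_intro (conj t0 t1)); lra.
Qed.

Lemma golden_sqr_le (R : realType) (psi : R) : 1 < psi -> psi <= golden R ->
  psi ^+ 2 <= psi + 1.
Proof.
rewrite /golden => psi1 psi_le.
have s5 : Num.sqrt (5 : R) ^+ 2 = 5 by rewrite sqr_sqrtr.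
have s0 : 0 <= Num.sqrt (5 : R) by apply: sqrtr_ge0.
have h : 2 * psi - 1 <= Num.sqrt 5 by move: psi_le; rewrite ler_pdivlMr //; lra.
have : (2 * psi - 1) ^+ 2 <= Num.sqrt 5 ^+ 2 by apply: lerXn2r; rewrite ?nnegrE //; lra.
rewrite s5; nra.
Qed.

(* The step-size conditions leave a positive margin [dl] in the descent inequality,
   provided the step sizes vary by a factor at most [1 + eps]. *)
Lemma exists_descent_margin (R : realFieldType) (psi mu mu' : R) :
  1 < psi -> psi ^+ 2 <= psi + 1 -> 0 < 2 * mu' -> 2 * mu' < mu -> mu < psi / 2 ->
  exists eps dl, [/\ 0 < eps, eps <= 1 / 2, 0 < dl &
     dl <= psi * (1 - eps) - (1 + eps) ^+ 2 * mu ^+ 2 - 2 * mu'].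
Proof.
move=> psi1 psi_golden mu'0 mu'_mu mu_psi.
set dt := psi - mu ^+ 2 - 2 * mu'; set D := psi + 3 * mu ^+ 2.
have mu0 : 0 < mu by lra.
have mu_sq : mu ^+ 2 < psi ^+ 2 / 4.
  have : mu ^+ 2 < (psi / 2) ^+ 2 by rewrite ltrXn2r // ?nnegrE; lra.
  by rewrite expr_div_n; lra.
have dt0 : 0 < dt by rewrite /dt; lra.
have D0 : 0 < D by rewrite /D; nra.
exists (dt / (2 * D)), (dt / 2); split; last first.
- have eD : dt / (2 * D) * D = dt / 2 by field; rewrite gt_eqF.
  have e1 : dt / (2 * D) <= 1 by rewrite ler_pdivrMr; [rewrite /dt /D; nra | lra].
  have e0 : 0 <= dt / (2 * D) by apply: divr_ge0; lra.
  move: eD e1 e0; set e := dt / (2 * D); rewrite /D /dt; nra.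
- lra.
- by rewrite ler_pdivrMr; [rewrite /dt /D; nra | lra].
- by apply: divr_gt0; lra.
Qed.

Lemma bernoulli_ineq (R : realDomainType) (e : R) (i : nat) : 0 <= e ->
  1 + i%:R * e <= (1 + e) ^+ i.
Proof.
move=> e0; elim: i => [|i IH]; first by rewrite mul0r addr0 expr0.
rewrite exprS -natr1 mulrDl mul1r.
have h1 : 0 <= (1 + e) ^+ i by apply: exprn_ge0; lra.
have h2 : 0 <= i%:R :> R by apply: ler0n.
have : 0 <= e * ((1 + e) ^+ i - 1 - i%:R * e) by apply: mulr_ge0 => //; lra.
have : 0 <= e * (i%:R * e) by apply: mulr_ge0 => //; apply: mulr_ge0.
nra.
Qed.

Lemma eventually_ratio_le (R : archiRealFieldType) (t : nat -> R) (tmin eps : R) :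
  0 < tmin -> 0 < eps -> (forall k, tmin <= t k) -> (forall k, t k.+1 <= t k) ->
  exists N, forall k, (N <= k)%N -> t k <= (1 + eps) * t k.+1.
Proof.
move=> tmin0 eps0 t_ge t_dec; apply: contrapT => no_N.
have drops N : exists2 k, (N <= k)%N & (1 + eps) * t k.+1 < t k.
  apply: contrapT => no_k; apply: no_N; exists N => k Nk.
  by rewrite leNgt; apply/negP => drop_k; apply: no_k; exists k.
have t_mono : {homo t : i j / (i <= j)%N >-> j <= i}.
  apply: (@homo_leq _ t (fun a b => b <= a) _ _ t_dec) => [a|b a c ba cb]; first exact: lexx.
  exact: le_trans cb ba.
have geo i : exists N, (1 + eps) ^+ i * t N <= t 0%N.
  elim: i => [|i [N HN]]; first by exists 0%N; rewrite expr0 mul1r.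
  have [k Nk drop_k] := drops N.
  exists k.+1; rewrite exprSr -mulrA; apply: le_trans HN.
  rewrite ler_pM2l; last by apply: exprn_gt0; lra.
  exact: le_trans (ltW drop_k) (t_mono _ _ Nk).
have b0 : 0 <= t 0%N / (tmin * eps).
  by apply: divr_ge0; [apply: le_trans (t_ge 0%N); lra | nra].
have := archi_boundP b0; set i := Num.Def.archi_bound _ => t0_lt.
have [N HN] := geo i.
have := bernoulli_ineq i (ltW eps0); have := t_ge N.
have : t 0%N < i%:R * (tmin * eps) by rewrite -ltr_pdivrMr //; nra.
have : 0 <= (1 + eps) ^+ i by apply: exprn_ge0; lra.
nra.
Qed.

Lemma descent_contraction (R : realFieldType) (ia bi mu' a1 a2 a3 a4 k c E0 Z Y D W X : R) :
  0 <= Z -> 0 <= Y -> 0 <= D -> 0 <= W -> 0 <= X ->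
  0 <= ia -> 0 <= bi -> 0 <= mu' -> 0 <= c ->
  Z <= 3 * (D + X + W) -> c * (3 * ia + mu') <= k ->
  k <= a1 -> k <= a2 -> c * bi <= a3 -> k <= a4 ->
  ia * Z + bi * Y + mu' * D + a1 * D + a2 * W + a3 * Y + a4 * X <= E0 ->
  (1 + c) * (ia * Z + bi * Y + mu' * D) <= E0.
Proof.
move=> Z0 Y0 D0 W0 X0 ia0 bi0 mu'0 c0 Z_le ck ka1 ka2 ca3 ka4 descent.
have := ler_wpM2l (mulr_ge0 c0 ia0) Z_le.
have := ler_wpM2r (_ : 0 <= D + X + W) ck; rewrite !addr_ge0 // => ck'.
have := ler_wpM2r D0 ka1; have := ler_wpM2r W0 ka2.
have := ler_wpM2r Y0 ca3; have := ler_wpM2r X0 ka4.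
have := mulr_ge0 (mulr_ge0 c0 mu'0) (addr_ge0 X0 W0).
lra.
Qed.

Lemma geometric_of_contraction (R : realFieldType) (E : nat -> R) (th : R) (N : nat) :
  0 < th -> (forall j, (N <= j)%N -> E j.+1 <= th * E j) ->
  forall j, (N <= j)%N -> E j <= E N / th ^+ N * th ^+ j.
Proof.
move=> th0 contr j /subnKC <-; elim: (j - N)%N => [|d IH].
  by rewrite addn0 divfK // expf_neq0 // gt_eqF.
rewrite addnS; apply: le_trans (contr _ (leq_addr _ _)) _.
by rewrite exprS mulrCA ler_wpM2l // ltW.
Qed.

Lemma geometric_bound_scaled (R : realFieldType) (p q A th : R) :
  0 < p -> 0 <= A -> 0 <= th -> p * q <= A * th -> q <= (p^-1 * A + 1) * th.
Proof.
move=> p0 A0 th0 pq_le; rewrite mulrDl mul1r -mulrA ler_wpDr ?mulr_ge0 //.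
by rewrite ler_pdivlMl.
Qed.

Section InnerProduct.
Variables (R : realType) (n : nat).
Implicit Types (u v p a b c : 'rV[R]_n) (t s : R).

Local Ltac dotv_ring := rewrite /dotv ?mulr_sumr -?sumrN -?sumrB -?big_split /=;
  apply: eq_bigr => i _; rewrite !mxE; ring.

Lemma dotvC u v : dotv u v = dotv v u.
Proof. by rewrite /dotv; apply: eq_bigr => i _; rewrite mulrC. Qed.

Lemma dotvDl u v p : dotv (u + v) p = dotv u p + dotv v p.
Proof. dotv_ring. Qed.

Lemma dotvDr u v p : dotv p (u + v) = dotv p u + dotv p v.
Proof. dotv_ring. Qed.

Lemma dotvBl u v p : dotv (u - v) p = dotv u p - dotv v p.
Proof. dotv_ring. Qed.

Lemma dotvBr u v p : dotv p (u - v) = dotv p u - dotv p v.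
Proof. dotv_ring. Qed.

Lemma dotvNl u p : dotv (- u) p = - dotv u p.
Proof. dotv_ring. Qed.

Lemma dotvZl t u p : dotv (t *: u) p = t * dotv u p.
Proof. dotv_ring. Qed.

Lemma dotvZr t u p : dotv p (t *: u) = t * dotv p u.
Proof. dotv_ring. Qed.

Lemma dotvvZ t u : dotv (t *: u) (t *: u) = t ^+ 2 * dotv u u.
Proof. by rewrite dotvZl dotvZr mulrA -expr2. Qed.

Lemma dotvvD u v : dotv (u + v) (u + v) = dotv u u + 2 * dotv u v + dotv v v.
Proof. rewrite dotvDl !dotvDr (dotvC v u); ring. Qed.

Lemma dotvvC u v : dotv (u - v) (u - v) = dotv (v - u) (v - u).
Proof. rewrite !(dotvBl, dotvBr) (dotvC v u); ring. Qed.

Lemma dotvv_ge0 u : 0 <= dotv u u.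
Proof. by apply: sumr_ge0 => i _; rewrite -expr2 sqr_ge0. Qed.

Lemma enorm_ge0 u : 0 <= enorm u.
Proof. exact: sqrtr_ge0. Qed.

Lemma enorm_sqr u : enorm u ^+ 2 = dotv u u.
Proof. by rewrite sqr_sqrtr // dotvv_ge0. Qed.

Lemma dotv_young a b s : 0 < s -> 2 * dotv a b <= s * dotv a a + s^-1 * dotv b b.
Proof.
move=> s0; have := dotvv_ge0 (s *: a - b).
rewrite !(dotvBl, dotvBr, dotvZl, dotvZr) (dotvC b a) => H.
rewrite -(ler_pM2l s0) mulrDr (mulrA s s^-1) mulfV ?gt_eqF // mul1r; nra.
Qed.

Lemma dotv_young_scaled a b s t : 0 < s ->
  - (2 * t * dotv a b) <= s * t ^+ 2 * dotv a a + s^-1 * dotv b b.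
Proof.
move=> s0; have := dotv_young (- (t *: a)) b s0.
rewrite -scaleNr dotvvZ dotvZl sqrrN; lra.
Qed.

Lemma dotv_polar a b c :
  2 * dotv (a - b) (c - b) = dotv (a - b) (a - b) + dotv (c - b) (c - b) - dotv (a - c) (a - c).
Proof. rewrite !(dotvBl, dotvBr) (dotvC b a) (dotvC c a) (dotvC b c); ring. Qed.

Lemma dotvv_convex t s u v p : t + s = 1 ->
  dotv (t *: u + s *: v - p) (t *: u + s *: v - p) =
  t * dotv (u - p) (u - p) + s * dotv (v - p) (v - p) - t * s * dotv (u - v) (u - v).
Proof.
move=> ts1; have -> : s = 1 - t by rewrite -ts1; ring.
rewrite !(dotvBl, dotvBr, dotvDl, dotvDr, dotvZl, dotvZr) (dotvC v u) (dotvC p u) (dotvC p v).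
ring.
Qed.

Lemma dotvv_add3_le a b c :
  dotv (a + b + c) (a + b + c) <= 3 * (dotv a a + dotv b b + dotv c c).
Proof.
have := dotvv_ge0 (a - b); have := dotvv_ge0 (b - c); have := dotvv_ge0 (a - c).
rewrite !(dotvBl, dotvBr, dotvDl, dotvDr) (dotvC b a) (dotvC c a) (dotvC c b); lra.
Qed.

Lemma dotv_sqr_le u v : dotv u v ^+ 2 <= dotv u u * (dotv v v + 1).
Proof.
set A := dotv u u; set B := dotv u v; set C := dotv v v.
have := dotvv_ge0 ((C + 1) *: u - B *: v).
rewrite !(dotvBl, dotvBr, dotvZl, dotvZr) (dotvC v u) -/A -/B -/C => H.
have C0 : 0 <= C by apply: dotvv_ge0.
have A0 : 0 <= A by apply: dotvv_ge0.
have H2 : B ^+ 2 * (C + 2) <= A * (C + 1) * (C + 2) by nra.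
by rewrite -(ler_pM2r (_ : 0 < C + 2)) //; lra.
Qed.

Lemma dotvv_average psi u v p : 1 < psi ->
  psi / (psi - 1) * dotv ((psi - 1) / psi *: u + psi^-1 *: v - p)
                         ((psi - 1) / psi *: u + psi^-1 *: v - p)
  = dotv (u - p) (u - p) + (psi - 1)^-1 * dotv (v - p) (v - p) - psi^-1 * dotv (u - v) (u - v).
Proof.
move=> psi1; have psi0 : psi != 0 by rewrite gt_eqF // (lt_trans ltr01).
have psi10 : psi - 1 != 0 by rewrite subr_eq0 gt_eqF.
rewrite dotvv_convex; last by field.
by field; rewrite psi0 psi10.
Qed.

Lemma dotvv_average_le3 psi u u' v p : 1 < psi ->
  dotv ((psi - 1) / psi *: u + psi^-1 *: v - p) ((psi - 1) / psi *: u + psi^-1 *: v - p)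
  <= 3 * (dotv (u - u') (u - u') + dotv (u' - p) (u' - p) + dotv (v - u') (v - u')).
Proof.
move=> psi1; have psi0 : 0 < psi by apply: lt_trans psi1.
have -> : (psi - 1) / psi *: u + psi^-1 *: v - p
    = ((psi - 1) / psi) *: (u - u') + (u' - p) + psi^-1 *: (v - u').
  by apply/rowP => i; rewrite !mxE; field; rewrite gt_eqF.
apply: le_trans (dotvv_add3_le _ _ _) _; rewrite !dotvvZ ler_pM2l //.
have c1 : ((psi - 1) / psi) ^+ 2 <= 1.
  by rewrite expr_le1 ?divr_ge0 ?ler_pdivrMr ?mul1r //; lra.
have c2 : psi^-1 ^+ 2 <= 1 by rewrite expr_le1 ?invf_le1 ?invr_ge0 // ltW.
have := ler_wpM2r (dotvv_ge0 (u - u')) c1; have := ler_wpM2r (dotvv_ge0 (v - u')) c2.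
lra.
Qed.

End InnerProduct.

Section Adjoint.
Variables (R : realType) (n m : nat) (K : 'M[R]_(n, m)).

Lemma dotv_trmx (u : 'rV[R]_n) (v : 'rV[R]_m) : dotv (v *m K^T) u = dotv (u *m K) v.
Proof.
rewrite /dotv; under eq_bigr do rewrite !mxE big_distrl /=.
under [RHS]eq_bigr do rewrite !mxE big_distrl /=.
rewrite exchange_big /=; apply: eq_bigr => i _; apply: eq_bigr => j _.
by rewrite !mxE; ring.
Qed.

Lemma mulmx_dotvv_le : exists2 C : R, 0 < C &
  forall u : 'rV[R]_n, dotv (u *m K) (u *m K) <= C * dotv u u.
Proof.
pose col (j : 'I_m) : 'rV[R]_n := \row_i K i j.
exists (1 + \sum_(j < m) (dotv (col j) (col j) + 1)).
  by rewrite ltr_pwDl // sumr_ge0 // => j _; rewrite addr_ge0 // dotvv_ge0.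
move=> u; rewrite mulrDl mul1r; apply: ler_wpDl; first exact: dotvv_ge0.
rewrite mulr_suml; apply: ler_sum => j _.
have -> : (u *m K) ord0 j = dotv u (col j).
  by rewrite !mxE; apply: eq_bigr => i _; rewrite !mxE.
by rewrite -expr2 mulrC dotv_sqr_le.
Qed.

Lemma enorm_mulmx_le : exists2 C : R, 0 < C &
  forall u : 'rV[R]_n, enorm (u *m K) <= C * enorm u.
Proof.
have [C C0 K_le] := mulmx_dotvv_le.
exists (Num.sqrt C); first by rewrite sqrtr_gt0.
move=> u; rewrite /enorm -sqrtrM ?(ltW C0) // ler_sqrt ?K_le //.
by rewrite mulr_ge0 ?dotvv_ge0 ?(ltW C0).
Qed.

End Adjoint.

Lemma qratio_sqr_le (R : realType) (t a b : R) : 0 <= t -> 0 <= a -> 0 <= b ->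
  (t%:E <= qratio a b)%E -> t ^+ 2 * b ^+ 2 <= a ^+ 2.
Proof.
move=> t0 a0 b0; rewrite /qratio; case: eqP => [->|/eqP b_neq0].
  by rewrite expr0n mulr0 sqr_ge0.
have b_gt0 : 0 < b by rewrite lt_def b_neq0.
rewrite lee_fin ler_pdivlMr // -exprMn => tb_le.
by apply: lerXn2r; rewrite // nnegrE mulr_ge0.
Qed.

Lemma le_qratio (R : realType) (c d e b : R) : 0 < c -> 0 < d -> 0 <= b ->
  b <= d * e -> ((c / d)%:E <= qratio (c * e) b)%E.
Proof.
move=> c0 d0 b0 b_le; rewrite /qratio; case: eqP => [_|/eqP b_neq0]; first by rewrite leey.
have b_gt0 : 0 < b by rewrite lt_def b_neq0.
rewrite lee_fin ler_pdivlMr // mulrAC ler_pdivrMr // -mulrA ler_pM2l //.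
by rewrite mulrC.
Qed.

Lemma Rlinear_conv_of_sqr_le (R : realType) (n m : nat) (x : nat -> 'rV[R]_n)
    (y : nat -> 'rV[R]_m) (xb : 'rV[R]_n) (yb : 'rV[R]_m) (B th : R) (N : nat) :
  0 < th < 1 -> 0 <= B ->
  (forall k, (N <= k)%N ->
     dotv (x k - xb) (x k - xb) + dotv (y k - yb) (y k - yb) <= B * th ^+ k) ->
  Rlinear_conv x y xb yb.
Proof.
move=> /andP[th0 th1] B0 sqr_le.
exists (Num.sqrt B + 1); first by rewrite ltr_pwDr ?sqrtr_ge0.
exists (fun k => Num.sqrt (th ^+ k)); split.
  exists (Num.sqrt th); first by rewrite sqrtr_gt0 th0 /= -sqrtr1 ltr_sqrt // ltr01.
  by exists 0%N => k _; rewrite !ger0_norm ?sqrtr_ge0 // exprS sqrtrM // ltW.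
exists N => k Nk; rewrite !enorm_sqr.
apply: (@le_trans _ _ (Num.sqrt (B * th ^+ k))).
  by rewrite ler_sqrt ?sqr_le ?mulr_ge0 ?exprn_ge0 ?(ltW th0).
by rewrite sqrtrM // ler_wpM2r ?sqrtr_ge0 // lerDl.
Qed.

Section Prox.
Variables (R : realType) (n : nat) (lam : R) (phi : 'rV[R]_n -> \bar R).
Hypothesis phiP : proper_fun phi.

Lemma is_prox_fin_num v u : is_prox lam phi v u -> phi u \is a fin_num.
Proof.
case: phiP => phi_gtNy [u0 phi_u0] prox_u; apply: fin_real; rewrite phi_gtNy /=.
move: (prox_u u0) phi_u0; case: (phi u) => [r| |] //=.
- by rewrite ltry.
- by case: (phi u0).
Qed.

(* Compare u with the points t u' + (1 - t) u of the segment [u, u'] and let t -> 0. *)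
Lemma is_prox_vi v u u' : 0 < lam -> convex_efun phi -> is_prox lam phi v u ->
  phi u' \is a fin_num -> dotv (v - u) (u' - u) <= lam * (fine (phi u') - fine (phi u)).
Proof.
move=> lam0 phiC prox_u fin_u'; have fin_u := is_prox_fin_num prox_u.
set a := fine (phi u); set a' := fine (phi u').
set D := dotv (v - u) (u' - u); set N := dotv (u' - u) (u' - u).
suff : D <= lam * (a' - a) + 0 by rewrite addr0.
apply: (@ler_of_le_add_scaled _ _ _ (N / 2)); first by rewrite divr_ge0 ?dotvv_ge0.
move=> t /andP[t0 t1]; set ut := t *: u' + (1 - t) *: u.
have conv_ut := phiC u' u t (andb_true_intro (conj t0 t1)).
rewrite -/ut -(fineK fin_u) -(fineK fin_u') -!EFinM -EFinD in conv_ut.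
have Eut : ut - v = (u - v) + t *: (u' - u).
  by rewrite /ut; apply/rowP => i; rewrite !mxE; ring.
have : a + (2 * lam)^-1 * dotv (u - v) (u - v)
    <= t * a' + (1 - t) * a + (2 * lam)^-1 * dotv (ut - v) (ut - v).
  rewrite -lee_fin EFinD /a fineK // -!enorm_sqr.
  by apply: le_trans (prox_u ut) _; rewrite EFinD leeD2r.
have ED : dotv (u - v) (u' - u) = - D by rewrite /D -dotvNl opprB.
rewrite Eut (dotvvD (u - v)) dotvvZ dotvZr ED -/N => H.
have lam2 : 0 < 2 * lam by lra.
have {}H : t * (2 * lam * a) <= t * (2 * lam * a' - 2 * D + t * N).
  move: H; rewrite -(ler_pM2l lam2) !mulrDr !mulrA mulfV ?gt_eqF // !mul1r; nra.
by move: H; rewrite ler_pM2l //; nra.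
Qed.

End Prox.

Section Conjugate.
Variables (R : realType) (m : nat) (g : 'rV[R]_m -> \bar R).
Hypothesis gP : proper_fun g.

Lemma fconj_ge w y : g w \is a fin_num -> ((dotv w y - fine (g w))%:E <= fconj g y)%E.
Proof.
move=> fin_w; apply: ereal_sup_ubound => /=.
by exists w => //; rewrite EFinB fineK.
Qed.

Lemma fconj_subdiff w y : g w \is a fin_num ->
  (forall w', g w' \is a fin_num -> dotv y (w' - w) <= fine (g w') - fine (g w)) ->
  fconj g y = (dotv w y - fine (g w))%:E /\ subdiff (fconj g) y w.
Proof.
case: gP => g_gtNy _ fin_w sub_y.
have Eg : fconj g y = (dotv w y - fine (g w))%:E.
  apply/eqP; rewrite eq_le fconj_ge // andbT.
  apply: ge_ereal_sup => _ [w' _ <-].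
  have := g_gtNy w'; case Ew': (g w') => [r| |] //= _; last by rewrite leNye.
  have := sub_y w'; rewrite Ew' => /(_ isT) /=.
  rewrite dotvBr (dotvC y w') (dotvC y w) -EFinB lee_fin; lra.
split=> //; split=> [|y']; first by rewrite Eg.
rewrite Eg -EFinD.
have -> : dotv w y - fine (g w) + dotv w (y' - y) = dotv w y' - fine (g w).
  by rewrite dotvBr; ring.
exact: fconj_ge.
Qed.

(* The prox optimality condition says that y1 is a subgradient of g at w, hence w
   is a subgradient of g^* at y1, where the strong convexity of g^* applies. *)
Lemma dual_update_ineq (sig gam : R) (y0 y1 w p yb : 'rV[R]_m) :
  0 < sig -> convex_efun g -> strongly_convex_efun (fconj g) gam ->
  is_prox sig^-1 g (sig^-1 *: y0 + p) w -> y1 = y0 + sig *: (p - w) ->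
  fconj g yb \is a fin_num ->
  fconj g y1 \is a fin_num /\
  sig * fine (fconj g y1) + sig * dotv p (yb - y1) + dotv (y0 - y1) (yb - y1)
    + sig * (gam / 2 * enorm (yb - y1) ^+ 2) <= sig * fine (fconj g yb).
Proof.
move=> sig0 gC gsc prox_w Ey1 fin_yb.
have sigV0 : 0 < sig^-1 by rewrite invr_gt0.
have fin_w := is_prox_fin_num gP prox_w.
have sub_y1 w' : g w' \is a fin_num -> dotv y1 (w' - w) <= fine (g w') - fine (g w).
  move=> fin_w'; have := is_prox_vi gP sigV0 gC prox_w fin_w'.
  have -> : sig^-1 *: y0 + p - w = sig^-1 *: y1.
    by rewrite Ey1; apply/rowP => i; rewrite !mxE; field; rewrite gt_eqF.
  by rewrite dotvZl -(ler_pM2l sig0) !mulrA mulfV ?gt_eqF // !mul1r.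
have [Eg sub_w] := fconj_subdiff fin_w sub_y1.
have fin_y1 : fconj g y1 \is a fin_num by rewrite Eg.
split=> //; have := @gsc yb y1 w sub_w.
rewrite -(fineK fin_yb) -(fineK fin_y1) -EFinD lee_fin -(ler_pM2l sig0) => H.
have Ew : sig * dotv w (yb - y1) = sig * dotv p (yb - y1) + dotv (y0 - y1) (yb - y1).
  have -> : y0 - y1 = sig *: (w - p) by rewrite Ey1; apply/rowP => i; rewrite !mxE; ring.
  by rewrite dotvZl -mulrDr -dotvDl addrCA subrr addr0.
move: H; rewrite !mulrDr Ew; lra.
Qed.

End Conjugate.

Section OneStep.
Variables (R : realType) (n m : nat).
Variables (f : 'rV[R]_n -> \bar R) (g : 'rV[R]_m -> \bar R) (K : 'M[R]_(n, m)).
Variables (h : 'rV[R]_n -> R) (gh : 'rV[R]_n -> 'rV[R]_n) (gam_g gam_h : R).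
Variables (xb : 'rV[R]_n) (yb : 'rV[R]_m).
Hypotheses (fP : proper_fun f) (fC : convex_efun f) (gP : proper_fun g) (gC : convex_efun g).
Hypotheses (gsc : strongly_convex_efun (fconj g) gam_g) (hsc : strongly_convex_rfun h gh gam_h).
Hypothesis saddle : saddle_point f h K g xb yb.

Lemma saddle_point_primal x : f x \is a fin_num ->
  fine (f xb) + h xb + dotv (xb *m K) yb <= fine (f x) + h x + dotv (x *m K) yb.
Proof.
move=> fin_x; case: saddle => fin_xb fin_yb /(_ x yb) /andP[_].
by rewrite /lagr -(fineK fin_xb) -(fineK fin_yb) -(fineK fin_x) -!EFinD lee_fin; lra.
Qed.

Lemma saddle_point_dual y : fconj g y \is a fin_num ->
  fine (fconj g yb) - dotv (xb *m K) yb <= fine (fconj g y) - dotv (xb *m K) y.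
Proof.
move=> fin_y; case: saddle => fin_xb fin_yb /(_ xb y) /andP[+ _].
by rewrite /lagr -(fineK fin_xb) -(fineK fin_yb) -(fineK fin_y) -!EFinD lee_fin; lra.
Qed.

Lemma primal_update_ineq (tau : R) (z x0 x1 u : 'rV[R]_n) (y : 'rV[R]_m) :
  0 < tau -> is_prox tau f (z - tau *: (y *m K^T) - tau *: gh x0) x1 ->
  f u \is a fin_num ->
  dotv (z - x1) (u - x1) - tau * dotv (u *m K - x1 *m K) y - tau * dotv (gh x0) (u - x1)
    <= tau * (fine (f u) - fine (f x1)).
Proof.
move=> tau0 prox_x1 fin_u; have := is_prox_vi fP tau0 fC prox_x1 fin_u.
have -> : z - tau *: (y *m K^T) - tau *: gh x0 - x1
    = (z - x1) - tau *: (y *m K^T) - tau *: gh x0.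
  by apply/rowP => i; rewrite !mxE; ring.
rewrite !dotvBl !dotvZl dotv_trmx mulmxBl !dotvBl; lra.
Qed.

(* The optimality conditions of the two prox steps (the earlier primal one rescaled by
   tau0 / taum), the saddle point inequalities and the strong convexity of h, summed. *)
Lemma step_combined_ineq (psi beta taum tau0 : R) (xm x0 x1 z0 z1 : 'rV[R]_n)
    (ym y0 w0 : 'rV[R]_m) :
  0 < psi -> 0 < beta -> 0 < taum -> 0 < tau0 ->
  z1 = ((psi - 1) / psi) *: x0 + psi^-1 *: z0 ->
  is_prox taum f (z0 - taum *: (ym *m K^T) - taum *: gh xm) x0 ->
  is_prox tau0 f (z1 - tau0 *: (y0 *m K^T) - tau0 *: gh x0) x1 ->
  is_prox (beta * tau0)^-1 g ((beta * tau0)^-1 *: ym + x0 *m K) w0 ->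
  y0 = ym + (beta * tau0) *: (x0 *m K - w0) ->
  dotv (z1 - x1) (xb - x1) + tau0 / taum * psi * dotv (z1 - x0) (x1 - x0)
  + beta^-1 * dotv (ym - y0) (yb - y0) + tau0 * (gam_g / 2) * dotv (y0 - yb) (y0 - yb)
  + tau0 * (gam_h / 2) * dotv (x0 - xb) (x0 - xb)
  + tau0 * dotv (x1 *m K - x0 *m K) (y0 - ym) + tau0 * dotv (gh x0 - gh xm) (x1 - x0) <= 0.
Proof.
move=> psi0 beta0 taum0 tau00 Ez1 prox_x0 prox_x1 prox_w0 Ey0.
have [fin_xb fin_yb _] := saddle.
have fin_x0 := is_prox_fin_num fP prox_x0.
have fin_x1 := is_prox_fin_num fP prox_x1.
have HA := primal_update_ineq tau00 prox_x1 fin_xb.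
have HB := primal_update_ineq taum0 prox_x0 fin_x1.
have [fin_y0 HD] := dual_update_ineq gP (mulr_gt0 beta0 tau00) gC gsc prox_w0 Ey0 fin_yb.
have S1 := ler_wpM2l (ltW tau00) (saddle_point_primal fin_x0).
have S2 := ler_wpM2l (ltW tau00) (saddle_point_dual fin_y0).
have Hh := ler_wpM2l (ltW tau00) (hsc xb x0).
have Ez0 : z0 - x0 = psi *: (z1 - x0).
  by rewrite Ez1; apply/rowP => i; rewrite !mxE; field; rewrite gt_eqF.
have rt : tau0 / taum * taum = tau0 by rewrite divfK ?gt_eqF.
have := ler_wpM2l (divr_ge0 (ltW tau00) (ltW taum0)) HB.
rewrite Ez0 dotvZl !(mulrBr, mulrDr) !mulrA rt => {}HB.
have beta_inv0 : 0 <= beta^-1 by rewrite invr_ge0 ltW.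
have := ler_wpM2l beta_inv0 HD.
rewrite enorm_sqr !mulrDr !mulrA mulVf ?gt_eqF // !mul1r => {}HD.
rewrite enorm_sqr in Hh.
rewrite !(dotvBl, dotvBr) in HA HB HD S1 S2 Hh *; lra.
Qed.

(* Young's inequality, with weights matched to the two step-size bounds. *)
Lemma step_cross_terms_le (beta mu mu' eps tau0 taup : R) (xm x0 x1 : 'rV[R]_n)
    (ym y0 : 'rV[R]_m) :
  0 < beta -> 0 < mu' -> 0 < tau0 -> tau0 <= (1 + eps) * taup ->
  tau0 ^+ 2 * dotv (gh x0 - gh xm) (gh x0 - gh xm) <= mu' ^+ 2 * dotv (x0 - xm) (x0 - xm) ->
  taup ^+ 2 * beta * dotv (x1 *m K - x0 *m K) (x1 *m K - x0 *m K)
    <= mu ^+ 2 * dotv (x1 - x0) (x1 - x0) ->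
  - (2 * tau0 * dotv (x1 *m K - x0 *m K) (y0 - ym))
  - 2 * tau0 * dotv (gh x0 - gh xm) (x1 - x0)
  <= (1 + eps) ^+ 2 * mu ^+ 2 * dotv (x1 - x0) (x1 - x0) + beta^-1 * dotv (y0 - ym) (y0 - ym)
     + mu' * dotv (x0 - xm) (x0 - xm) + mu' * dotv (x1 - x0) (x1 - x0).
Proof.
move=> beta0 mu'0 tau00 ratio grad_bound K_bound.
have YK : - (2 * tau0 * dotv (x1 *m K - x0 *m K) (y0 - ym))
    <= (1 + eps) ^+ 2 * mu ^+ 2 * dotv (x1 - x0) (x1 - x0) + beta^-1 * dotv (y0 - ym) (y0 - ym).
  apply: le_trans (dotv_young_scaled _ _ tau0 beta0) _; rewrite lerD2r.
  have tau_sq : tau0 ^+ 2 <= (1 + eps) ^+ 2 * taup ^+ 2.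
    have taup_ge : 0 <= (1 + eps) * taup := le_trans (ltW tau00) ratio.
    by rewrite -exprMn; apply: lerXn2r; rewrite ?nnegrE ?(ltW tau00).
  have := ler_wpM2r (mulr_ge0 (ltW beta0) (dotvv_ge0 (x1 *m K - x0 *m K))) tau_sq.
  have := ler_wpM2l (sqr_ge0 (1 + eps)) K_bound.
  lra.
have YH : - (2 * tau0 * dotv (gh x0 - gh xm) (x1 - x0))
    <= mu' * dotv (x0 - xm) (x0 - xm) + mu' * dotv (x1 - x0) (x1 - x0).
  have mu'V0 : 0 < mu'^-1 by rewrite invr_gt0.
  apply: le_trans (dotv_young_scaled _ _ tau0 mu'V0) _; rewrite invrK lerD2r -mulrA.
  apply: le_trans (ler_wpM2l (ltW mu'V0) grad_bound) _.
  by rewrite mulrA expr2 mulrA mulVf ?gt_eqF // mul1r.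
lra.
Qed.

Definition lyapunov (psi beta mu' : R) (z : 'rV[R]_n) (y : 'rV[R]_m) (x1 x0 : 'rV[R]_n) : R :=
  psi / (psi - 1) * dotv (z - xb) (z - xb) + beta^-1 * dotv (y - yb) (y - yb)
  + mu' * dotv (x1 - x0) (x1 - x0).

Lemma lyapunov_step (psi beta mu mu' eps dl taum tau0 taup : R)
    (xm x0 x1 z0 z1 z2 : 'rV[R]_n) (ym y0 w0 : 'rV[R]_m) :
  0 < beta -> 1 < psi -> psi ^+ 2 <= psi + 1 -> 0 < mu' ->
  0 < taum -> 0 < tau0 -> tau0 <= taum ->
  taum <= (1 + eps) * tau0 -> tau0 <= (1 + eps) * taup -> 0 <= eps -> eps <= 1 / 2 ->
  dl <= psi * (1 - eps) - (1 + eps) ^+ 2 * mu ^+ 2 - 2 * mu' ->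
  z1 = ((psi - 1) / psi) *: x0 + psi^-1 *: z0 ->
  z2 = ((psi - 1) / psi) *: x1 + psi^-1 *: z1 ->
  is_prox taum f (z0 - taum *: (ym *m K^T) - taum *: gh xm) x0 ->
  is_prox tau0 f (z1 - tau0 *: (y0 *m K^T) - tau0 *: gh x0) x1 ->
  is_prox (beta * tau0)^-1 g ((beta * tau0)^-1 *: ym + x0 *m K) w0 ->
  y0 = ym + (beta * tau0) *: (x0 *m K - w0) ->
  tau0 ^+ 2 * dotv (gh x0 - gh xm) (gh x0 - gh xm) <= mu' ^+ 2 * dotv (x0 - xm) (x0 - xm) ->
  taup ^+ 2 * beta * dotv (x1 *m K - x0 *m K) (x1 *m K - x0 *m K)
    <= mu ^+ 2 * dotv (x1 - x0) (x1 - x0) ->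
  lyapunov psi beta mu' z2 y0 x1 x0
    + dl * dotv (x1 - x0) (x1 - x0) + psi / 2 * dotv (z1 - x0) (z1 - x0)
    + tau0 * gam_g * dotv (y0 - yb) (y0 - yb) + tau0 * gam_h * dotv (x0 - xb) (x0 - xb)
  <= lyapunov psi beta mu' z1 ym x0 xm.
Proof.
move=> beta0 psi1 psi_golden mu'0 taum0 tau00 tau_le ratio_m ratio_p eps0 eps_half dl_le
  Ez1 Ez2 prox_x0 prox_x1 prox_w0 Ey0 grad_bound K_bound.
have psi0 : 0 < psi := lt_trans ltr01 psi1.
have := step_combined_ineq psi0 beta0 taum0 tau00 Ez1 prox_x0 prox_x1 prox_w0 Ey0.
set r := tau0 / taum => comb.
have r_le1 : r <= 1 by rewrite /r ler_pdivrMr // mul1r.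
have r_ge : 1 - eps <= r.
  rewrite /r ler_pdivlMr //; have eps1 : 0 <= 1 - eps by lra.
  have := ler_wpM2l eps1 ratio_m; have := mulr_ge0 (mulr_ge0 eps0 eps0) (ltW tau00).
  lra.
have cross := step_cross_terms_le ym y0 beta0 mu'0 tau00 ratio_p grad_bound K_bound.
have HZ := dotvv_average x1 z1 xb psi1.
rewrite -Ez2 (dotvvC x1 xb) (dotvvC x1 z1) in HZ.
have P1 := dotv_polar z1 x1 xb.
have P2 : r * psi * (2 * dotv (z1 - x0) (x1 - x0)) = r * psi * (dotv (z1 - x0) (z1 - x0)
    + dotv (x1 - x0) (x1 - x0) - dotv (z1 - x1) (z1 - x1)) by rewrite dotv_polar.
have P3 : beta^-1 * (2 * dotv (ym - y0) (yb - y0)) = beta^-1 * (dotv (y0 - ym) (y0 - ym)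
    + dotv (y0 - yb) (y0 - yb) - dotv (ym - yb) (ym - yb)).
  by rewrite dotv_polar (dotvvC ym y0) (dotvvC yb y0).
(* The golden-ratio bound on psi makes the coefficient of |z1 - x1|^2 nonnegative. *)
have psi_le : psi <= 1 + psi^-1.
  by rewrite -(ler_pM2l psi0) mulrDr mulfV ?gt_eqF // mulr1 -expr2; lra.
have rpsi_le := ler_wpM2r (ltW psi0) r_le1.
have rpsi_ge := ler_wpM2r (ltW psi0) r_ge.
have r_half : 1 / 2 <= r by lra.
have rpsi_half := ler_wpM2r (ltW psi0) r_half.
have F1 : 0 <= (1 + psi^-1 - r * psi) * dotv (z1 - x1) (z1 - x1).
  by rewrite mulr_ge0 ?dotvv_ge0 //; lra.
have F2 : 0 <= (r * psi - psi / 2) * dotv (z1 - x0) (z1 - x0).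
  by rewrite mulr_ge0 ?dotvv_ge0 //; lra.
have F3 : 0 <= (r * psi - (1 + eps) ^+ 2 * mu ^+ 2 - 2 * mu' - dl) * dotv (x1 - x0) (x1 - x0).
  by rewrite mulr_ge0 ?dotvv_ge0 //; lra.
have Ecoef : psi / (psi - 1) = 1 + (psi - 1)^-1.
  by field; rewrite subr_eq0 gt_eqF.
rewrite /lyapunov Ecoef in HZ *; lra.
Qed.

End OneStep.

Section Iterates.
Variables (R : realType) (n m : nat).
Variables (f : 'rV[R]_n -> \bar R) (g : 'rV[R]_m -> \bar R) (K : 'M[R]_(n, m)).
Variables (h : 'rV[R]_n -> R) (gh : 'rV[R]_n -> 'rV[R]_n) (Lbar gam_g gam_h : R).
Variables (beta psi mu mu' : R).
Variables (z x : nat -> 'rV[R]_n) (w y : nat -> 'rV[R]_m) (tau : nat -> R).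
Variables (xb : 'rV[R]_n) (yb : 'rV[R]_m).
Hypotheses (fP : proper_fun f) (fC : convex_efun f) (gP : proper_fun g) (gC : convex_efun g).
Hypotheses (gam_g0 : 0 < gam_g) (gsc : strongly_convex_efun (fconj g) gam_g).
Hypotheses (gam_h0 : 0 < gam_h) (hsc : strongly_convex_rfun h gh gam_h).
Hypothesis gh_lip : forall u v, enorm (gh u - gh v) <= Lbar * enorm (u - v).
Hypothesis saddle : saddle_point f h K g xb yb.
Hypothesis iter : pgrpda f gh K g beta psi mu mu' z x w y tau.

Let beta0 : 0 < beta. Proof. by case: iter. Qed.
Let psi1 : 1 < psi. Proof. by case: iter => _ /andP[]. Qed.
Let psi_golden : psi ^+ 2 <= psi + 1.
Proof. by case: iter => _ /andP[psi1' /(golden_sqr_le psi1')]. Qed.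
Let mu_bounds : [/\ 0 < 2 * mu', 2 * mu' < mu & mu < psi / 2].
Proof. by case: iter => _ _ /andP[/andP[]]. Qed.
Let mu'0 : 0 < mu'. Proof. by case: mu_bounds; lra. Qed.

Let tau_def k : ((tau k.+1)%:E = Order.min (tau k)%:E
   (Order.min (qratio (mu * enorm (x k.+1 - x k))
                      (Num.sqrt beta * enorm (x k.+1 *m K - x k *m K)))
              (qratio (mu' * enorm (x k.+1 - x k)) (enorm (gh (x k.+1) - gh (x k))))))%E.
Proof. by case: iter => _ _ _ _ /(_ k) []. Qed.

Lemma tau_nonincreasing k : tau k.+1 <= tau k.
Proof. by rewrite -lee_fin tau_def ge_min lexx. Qed.

Lemma tau_lower_bound : exists2 tmin, 0 < tmin & forall k, tmin <= tau k.
Proof.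
have [C C0 K_le] := enorm_mulmx_le K.
set L := `|Lbar| + 1; have L0 : 0 < L by rewrite ltr_pwDr.
have sqrt_bC0 : 0 < Num.sqrt beta * C by rewrite mulr_gt0 ?sqrtr_gt0.
have tau00 : 0 < tau 0%N by case: iter => _ _ _ [].
exists (Order.min (tau 0%N) (Order.min (mu / (Num.sqrt beta * C)) (mu' / L))).
  by rewrite !lt_min tau00 !divr_gt0 //; case: mu_bounds; lra.
elim=> [|k IH]; first by rewrite ge_min lexx.
rewrite -lee_fin tau_def !le_min lee_fin IH /=; apply/andP; split.
- apply: le_trans (_ : (mu / (Num.sqrt beta * C))%:E <= _)%E.
    by rewrite lee_fin !ge_min lexx !orbT.
  apply: le_qratio; rewrite ?mulr_ge0 ?sqrtr_ge0 ?enorm_ge0 //; first by case: mu_bounds; lra.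
  by rewrite -mulrA ler_wpM2l ?sqrtr_ge0 // -mulmxBl.
- apply: le_trans (_ : (mu' / L)%:E <= _)%E; first by rewrite lee_fin !ge_min lexx !orbT.
  apply: le_qratio; rewrite ?enorm_ge0 //.
  apply: le_trans (gh_lip _ _) _; rewrite ler_wpM2r ?enorm_ge0 //.
  by have := ler_norm Lbar; rewrite /L; lra.
Qed.

Lemma tau_gt0 k : 0 < tau k.
Proof. by have [tmin tmin0 /(_ k)] := tau_lower_bound; apply: lt_le_trans. Qed.

Lemma coupling_step_le k :
  tau k.+1 ^+ 2 * beta * dotv (x k.+1 *m K - x k *m K) (x k.+1 *m K - x k *m K)
    <= mu ^+ 2 * dotv (x k.+1 - x k) (x k.+1 - x k).
Proof.
have := lexx (tau k.+1)%:E; rewrite {2}tau_def !le_min => /and3P[_ + _].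
move/qratio_sqr_le; rewrite !exprMn sqr_sqrtr ?(ltW beta0) // !enorm_sqr mulrA; apply.
- exact: ltW (tau_gt0 _).
- by rewrite mulr_ge0 ?enorm_ge0 //; case: mu_bounds; lra.
- by rewrite mulr_ge0 ?sqrtr_ge0 ?enorm_ge0.
Qed.

Lemma gradient_step_le k :
  tau k.+1 ^+ 2 * dotv (gh (x k.+1) - gh (x k)) (gh (x k.+1) - gh (x k))
    <= mu' ^+ 2 * dotv (x k.+1 - x k) (x k.+1 - x k).
Proof.
have := lexx (tau k.+1)%:E; rewrite {2}tau_def !le_min => /and3P[_ _].
move/qratio_sqr_le; rewrite !exprMn !enorm_sqr; apply.
- exact: ltW (tau_gt0 _).
- by rewrite mulr_ge0 ?enorm_ge0 // ltW.
- exact: enorm_ge0.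
Qed.

Local Notation E k := (lyapunov xb yb psi beta mu' (z k.+2) (y k) (x k.+1) (x k)).

Lemma lyapunov_terms_le k :
  [/\ psi / (psi - 1) * dotv (z k.+2 - xb) (z k.+2 - xb) <= E k,
      beta^-1 * dotv (y k - yb) (y k - yb) <= E k &
      mu' * dotv (x k.+1 - x k) (x k.+1 - x k) <= E k].
Proof.
have ia0 : 0 <= psi / (psi - 1) by apply: divr_ge0; have := psi1; lra.
have bi0 : 0 <= beta^-1 by rewrite invr_ge0 ltW.
have := mulr_ge0 ia0 (dotvv_ge0 (z k.+2 - xb)).
have := mulr_ge0 bi0 (dotvv_ge0 (y k - yb)).
have := mulr_ge0 (ltW mu'0) (dotvv_ge0 (x k.+1 - x k)).
by rewrite /lyapunov; split; lra.
Qed.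

Lemma lyapunov_ge0 k : 0 <= E k.
Proof.
have [_ _ E_ge] := lyapunov_terms_le k.
exact: le_trans (mulr_ge0 (ltW mu'0) (dotvv_ge0 _)) E_ge.
Qed.

Lemma lyapunov_descent : exists tmin dl N, [/\ 0 < tmin, 0 < dl,
  forall k, tmin <= tau k &
  forall j, (N <= j)%N ->
    E j.+1 + dl * dotv (x j.+2 - x j.+1) (x j.+2 - x j.+1)
    + psi / 2 * dotv (z j.+2 - x j.+1) (z j.+2 - x j.+1)
    + tau j.+1 * gam_g * dotv (y j.+1 - yb) (y j.+1 - yb)
    + tau j.+1 * gam_h * dotv (x j.+1 - xb) (x j.+1 - xb) <= E j].
Proof.
have [tmin tmin0 tau_ge] := tau_lower_bound.
have [mu'2 mu'_mu mu_psi] := mu_bounds.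
have [eps [dl [eps0 eps_half dl0 dl_le]]] :=
  exists_descent_margin psi1 psi_golden mu'2 mu'_mu mu_psi.
have [N ratio] := eventually_ratio_le tmin0 eps0 tau_ge tau_nonincreasing.
exists tmin, dl, N; split=> // j Nj.
case: iter => _ _ _ _ step.
have [_ prox_x0 _ prox_w0 Ey0] := step j.
have [Ez1 prox_x1 _ _ _] := step j.+1.
have [Ez2 _ _ _ _] := step j.+2.
apply: (lyapunov_step fP fC gP gC gsc hsc saddle beta0 psi1 psi_golden mu'0 (tau_gt0 j)
  (tau_gt0 j.+1) (tau_nonincreasing j) (ratio j Nj) (ratio j.+1 (leqW Nj)) (ltW eps0)
  eps_half dl_le Ez1 Ez2 prox_x0 prox_x1 prox_w0 Ey0 (gradient_step_le j)
  (coupling_step_le j.+1)).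
Qed.

Lemma lyapunov_contraction : exists2 c, 0 < c & exists N, forall j, (N <= j)%N ->
  (1 + c) * E j.+1 <= E j /\ c * dotv (x j.+1 - xb) (x j.+1 - xb) <= E j.
Proof.
have [tmin [dl [N [tmin0 dl0 tau_ge descent]]]] := lyapunov_descent.
have psi1' := psi1; have beta0' := beta0; have mu'0' := mu'0.
have ia0 : 0 < psi / (psi - 1) by apply: divr_gt0; lra.
set k := Num.min dl (Num.min (psi / 2) (tmin * gam_h)).
have k0 : 0 < k by rewrite !lt_min dl0 (mulr_gt0 tmin0 gam_h0) andbT /=; lra.
have den0 : 0 < 3 * (psi / (psi - 1)) + mu' by apply: addr_gt0 => //; apply: mulr_gt0.
set c := Num.min (k / (3 * (psi / (psi - 1)) + mu'))
                 (Num.min (tmin * gam_g * beta) (tmin * gam_h)).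
have c0 : 0 < c.
  rewrite !lt_min (mulr_gt0 (mulr_gt0 tmin0 gam_g0) beta0') (mulr_gt0 tmin0 gam_h0) !andbT.
  exact: divr_gt0.
have c_le1 : c <= k / (3 * (psi / (psi - 1)) + mu') by rewrite ge_min lexx.
have c_le2 : c <= tmin * gam_g * beta by rewrite !ge_min lexx orbT.
have c_le3 : c <= tmin * gam_h by rewrite !ge_min lexx !orbT.
have tau_gam_g j : tmin * gam_g <= tau j * gam_g by rewrite ler_wpM2r ?(ltW gam_g0).
have tau_gam_h j : tmin * gam_h <= tau j * gam_h by rewrite ler_wpM2r ?(ltW gam_h0).
exists c => //; exists N => j Nj; have desc := descent j Nj; split.
- case: iter => _ _ _ _ /(_ j.+2) [Ez _ _ _ _].
  move: desc; rewrite /lyapunov; apply: (descent_contraction (k := k)).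
  all: rewrite ?dotvv_ge0 ?invr_ge0 ?(ltW ia0) ?(ltW beta0') ?(ltW mu'0') ?(ltW c0) //.
  + by rewrite Ez; apply: dotvv_average_le3.
  + by rewrite -ler_pdivlMr.
  + by rewrite ge_min lexx.
  + by rewrite !ge_min lexx orbT.
  + by rewrite ler_pdivrMr // (le_trans c_le2) // ler_wpM2r ?(ltW beta0').
  + by apply: le_trans (tau_gam_h j.+1); rewrite !ge_min lexx !orbT.
- have := lyapunov_ge0 j.+1.
  have := ler_wpM2r (dotvv_ge0 (x j.+1 - xb)) (le_trans c_le3 (tau_gam_h j.+1)).
  have := mulr_ge0 (ltW dl0) (dotvv_ge0 (x j.+2 - x j.+1)).
  have psi2 : 0 <= psi / 2 by lra.
  have := mulr_ge0 psi2 (dotvv_ge0 (z j.+2 - x j.+1)).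
  have := mulr_ge0 (mulr_ge0 (ltW (tau_gt0 j.+1)) (ltW gam_g0)) (dotvv_ge0 (y j.+1 - yb)).
  lra.
Qed.

Lemma lyapunov_geometric : exists th A N, [/\ 0 < th < 1, 0 <= A &
  forall j, (N <= j)%N ->
    E j <= A * th ^+ j /\ dotv (x j.+1 - xb) (x j.+1 - xb) <= A * th ^+ j].
Proof.
have [c c0 [N contr]] := lyapunov_contraction.
have c1 : 0 < 1 + c by rewrite addr_gt0.
have th0 : 0 < (1 + c)^-1 by rewrite invr_gt0.
have cV0 : 0 <= c^-1 by rewrite invr_ge0 ltW.
have B0 : 0 <= E N / (1 + c)^-1 ^+ N by rewrite divr_ge0 ?lyapunov_ge0 ?exprn_ge0 ?ltW.
have contr' i : (N <= i)%N -> E i.+1 <= (1 + c)^-1 * E i.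
  move=> Ni; have [contr_i _] := contr i Ni.
  by rewrite -(ler_pM2l c1) mulrA mulfV ?gt_eqF // mul1r.
have geo := geometric_of_contraction (E := fun j => E j) th0 contr'.
exists (1 + c)^-1, ((1 + c^-1) * (E N / (1 + c)^-1 ^+ N)), N; split.
- by rewrite th0 invf_lt1 // ltrDl.
- by rewrite mulr_ge0 // addr_ge0.
move=> j Nj; have {geo}Ej := geo j Nj.
have Bj0 := le_trans (lyapunov_ge0 j) Ej.
have [_ Xj] := contr j Nj.
have Xj' : dotv (x j.+1 - xb) (x j.+1 - xb) <= c^-1 * E j by rewrite ler_pdivlMl.
have := ler_wpM2l cV0 Ej; have := mulr_ge0 cV0 Bj0; split; lra.
Qed.

Lemma pgrpda_sqr_bounds : exists (V1 V2 Z zeta : R) (n4 : nat),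
  [/\ 0 < V1, 0 < V2, 0 < Z, 0 < zeta < 1 &
      forall k, (n4 <= k)%N ->
        [/\ enorm (xb - z k.+2) ^+ 2 <= Z * zeta ^+ k,
            enorm (yb - y k) ^+ 2 <= V1 * zeta ^+ k &
            enorm (x k - x k.+1) ^+ 2 <= V2 * zeta ^+ k]].
Proof.
have [th [A [N [th01 A0 geo]]]] := lyapunov_geometric.
have ia0 : 0 < psi / (psi - 1) by apply: divr_gt0; have := psi1; lra.
have bi0 : 0 < beta^-1 by rewrite invr_gt0.
have coef_gt0 p : 0 < p -> 0 < p^-1 * A + 1.
  by move=> p0; rewrite ltr_wpDl // mulr_ge0 // invr_ge0 ltW.
exists (beta^-1^-1 * A + 1), (mu'^-1 * A + 1), ((psi / (psi - 1))^-1 * A + 1), th, N.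
have mu'0' := mu'0; split; rewrite ?coef_gt0 //.
move=> k Nk; have [Ek _] := geo k Nk; have [Zk Yk Dk] := lyapunov_terms_le k.
have thk0 : 0 <= th ^+ k by rewrite exprn_ge0 // ltW //; case/andP: th01.
rewrite !enorm_sqr (dotvvC xb) (dotvvC yb) (dotvvC (x k)).
by split; apply: geometric_bound_scaled => //; exact: le_trans Ek.
Qed.

Lemma pgrpda_Rlinear_conv : Rlinear_conv x y xb yb.
Proof.
have [th [A [N [th01 A0 geo]]]] := lyapunov_geometric.
have [th0 _] := andP th01; have beta0' := beta0.
apply: (@Rlinear_conv_of_sqr_le _ _ _ _ _ _ _ (A / th + beta * A) th N.+1) => //.
  by apply: addr_ge0; [exact: divr_ge0 A0 (ltW th0) | exact: mulr_ge0 (ltW beta0') A0].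
case=> [//|j] Nj.
have [_ Xj] := geo j Nj; have [Ej1 _] := geo j.+1 (leqW Nj).
have [_ Yj1 _] := lyapunov_terms_le j.+1.
have := ler_wpM2l (ltW beta0') (le_trans Yj1 Ej1).
rewrite mulrA mulfV ?gt_eqF // mul1r => Yj1'.
have Xj' : dotv (x j.+1 - xb) (x j.+1 - xb) <= A / th * th ^+ j.+1.
  by rewrite exprS mulrA divfK ?gt_eqF.
rewrite mulrDl; lra.
Qed.

End Iterates.

Unset Implicit Arguments.

Theorem theorem4p2 (R : realType) (n m : nat)
  (f : 'rV[R]_n -> \bar R) (g : 'rV[R]_m -> \bar R) (K : 'M[R]_(n, m))
  (h : 'rV[R]_n -> R) (gh : 'rV[R]_n -> 'rV[R]_n) (Lbar gam_g gam_h : R)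
  (beta psi mu mu' : R)
  (z x : nat -> 'rV[R]_n) (w y : nat -> 'rV[R]_m) (tau : nat -> R)
  (xb : 'rV[R]_n) (yb : 'rV[R]_m) :
  proper_fun f -> convex_efun f -> lsc_efun f ->
  proper_fun g -> convex_efun g -> lsc_efun g ->
  convex_rfun h -> is_gradient h gh ->
  (forall u v, enorm (gh u - gh v) <= Lbar * enorm (u - v)) ->
  A1 f h K g ->
  0 < gam_g -> strongly_convex_efun (fconj g) gam_g ->
  0 < gam_h -> strongly_convex_rfun h gh gam_h ->
  pgrpda f gh K g beta psi mu mu' z x w y tau ->
  saddle_point f h K g xb yb ->
  (forall eps : R, 0 < eps -> exists N : nat, forall k, (N <= k)%N ->
      enorm (x k - xb) < eps /\ enorm (y k - yb) < eps) ->
  (exists (V1 V2 Z zeta : R) (n4 : nat),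
     [/\ 0 < V1, 0 < V2, 0 < Z, 0 < zeta < 1 &
         forall k, (n4 <= k)%N ->
           [/\ enorm (xb - z k.+2) ^+ 2 <= Z * zeta ^+ k,
               enorm (yb - y k) ^+ 2 <= V1 * zeta ^+ k &
               enorm (x k - x k.+1) ^+ 2 <= V2 * zeta ^+ k]])
  /\ Rlinear_conv x y xb yb.
Proof.
move=> fP fC _ gP gC _ _ _ gh_lip _ gam_g0 gsc gam_h0 hsc iter saddle _.
split.
  exact: pgrpda_sqr_bounds fP fC gP gC gam_g0 gsc gam_h0 hsc gh_lip saddle iter.
exact: pgrpda_Rlinear_conv fP fC gP gC gam_g0 gsc gam_h0 hsc gh_lip saddle iter.
Qed.
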